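(* The edge generating series of the Dyck lattices is $$\sum_{n\ge0}\ell(\mathcal{D}_n)x^n=\frac{1-3x-(1-x)\sqrt{1-4x}}{2x\sqrt{1-4x}}.$$ Moreover, for every $n\ge2$, $$\ell(\mathcal{D}_n)=\frac12\binom{2n}{n}\frac{n-1}{n+1}=\binom{2n-1}{n-2},$$ and for every $n\ge1$ the Hasse index is $i(\mathcal{D}_n)=(n-1)/2$; in particular $i(\mathcal{D}_n)\sim n/2$.
   Context: Steps: $U=(1,1)$, $D=(1,-1)$. $\mathcal{D}_n$ is the set of Dyck paths of semi-length $n$ (lattice paths from $(0,0)$ to $(2n,0)$ with steps $U,D$ never going below the $x$-axis), partially ordered by $\gamma_1\le\gamma_2$ iff $\gamma_1$ lies weakly below $\gamma_2$. For a finite poset $P$, $\ell(P)$ is the number of edges of its Hasse diagram (i.e. the number of covering pairs), and the Hasse index is $i(P)=\ell(P)/|P|$. $a_n\sim b_n$ means $a_n/b_n\to1$. *)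

(* Dyck paths as lists of steps (true = U, false = D),
   the Dyck lattice as an explicitly enumerated finite poset, and reals
   (Stdlib Reals) for the generating function / Hasse index / asymptotics. *)
From Stdlib Require Import Reals List Arith Bool.
Import ListNotations.

Fixpoint all_words (k : nat) : list (list bool) :=
  match k with
  | 0 => [ [] ]
  | S k' => map (cons true) (all_words k') ++ map (cons false) (all_words k')
  end.

Fixpoint is_dyck_from (h : nat) (p : list bool) : bool :=
  match p with
  | [] => Nat.eqb h 0
  | true :: p' => is_dyck_from (S h) p'
  | false :: p' => Nat.ltb 0 h && is_dyck_from (h - 1) p'
  end.

Definition is_dyck (p : list bool) : bool := is_dyck_from 0 p.

Definition dyck (n : nat) : list (list bool) := filter is_dyck (all_words (2 * n)).

(* heights at abscissae 0, 1, ..., length p (no truncation occurs on Dyck paths) *)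
Fixpoint heights_from (h : nat) (p : list bool) : list nat :=
  h :: match p with
       | [] => []
       | b :: p' => heights_from (if b then S h else h - 1) p'
       end.

Definition heights (p : list bool) : list nat := heights_from 0 p.

Definition path_le (p q : list bool) : bool :=
  Nat.eqb (length p) (length q) &&
  forallb (fun ab => Nat.leb (fst ab) (snd ab)) (combine (heights p) (heights q)).

Definition path_eqb (p q : list bool) : bool :=
  if list_eq_dec bool_dec p q then true else false.

(* Generic finite poset given by an enumeration P and an order le. *)
Definition lt_in {A} (eqb le : A -> A -> bool) (x y : A) : bool :=
  le x y && negb (eqb x y).

Definition covers_in {A} (P : list A) (eqb le : A -> A -> bool) (x y : A) : bool :=
  lt_in eqb le x y &&
  negb (existsb (fun z => lt_in eqb le x z && lt_in eqb le z y) P).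

Definition hasse_edges {A} (P : list A) (eqb le : A -> A -> bool) : nat :=
  length (filter (fun xy => covers_in P eqb le (fst xy) (snd xy)) (list_prod P P)).

Definition ell_dyck (n : nat) : nat := hasse_edges (dyck n) path_eqb path_le.

Definition hasse_index_dyck (n : nat) : R :=
  (INR (ell_dyck n) / INR (length (dyck n)))%R.

(* 1. Covering relations.  y covers x in D_n exactly when y is obtained from x by
      turning one valley DU into a peak UD.  Such a flip raises the path at a single
      abscissa by 2, so nothing lies strictly between x and the flip; conversely, if
      x < y, the first abscissa where they differ lies at a down step of x, and the
      first valley of x after it can be flipped while staying below y.  Hence
      l(D_n) is the total number of valleys of the paths in D_n.

   2. Counting.  A nonempty Dyck path has one more peak than valleys.  Counting the
      peaks of all paths from height h by their first step gives a recursion whose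
      solution is (m - 1) * B(h, m - 2), where B(h, m) is the number of paths of
      length m from height h to 0 staying >= 0.  The reflection recursion for B
      gives B(0, 2n) = Cat(n), whence l(D_n) = (2n - 1) Cat(n - 1) - Cat(n), the
      closed forms of l(D_n) and the Hasse index i(D_n) = (n - 1) / 2.

   3. Generating function.  The central binomial series f(x) = sum C(2n,n) x^n
      satisfies (1 - 4x) f' = 2 f on |x| < 1/4, so f(x) sqrt(1 - 4x) is constant,
      i.e. f(x) = 1 / sqrt(1 - 4x).  Since l(D_m) = (C(2m+2,m+1) - 3 C(2m,m)) / 2
      for m >= 1, the edge series is a combination of shifts of f. *)

From Stdlib Require Import Reals Lra Lia List Arith Bool.
From Coquelicot Require Import Rbar Hierarchy Series PSeries Derive AutoDerive.
Import ListNotations.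
Open Scope nat_scope.

Definition step (h : nat) (b : bool) : nat := if b then S h else h - 1.

Lemma step_inj (h : nat) (a b : bool) : step h a = step h b -> a = b.
Proof. destruct a, b; simpl; lia. Qed.

Lemma dyck_tail (h : nat) (c : bool) (s : list bool) :
  is_dyck_from h (c :: s) = true -> is_dyck_from (step h c) s = true.
Proof. destruct c; simpl; [auto | now intros [_ H]%andb_true_iff]. Qed.

Lemma dyck_down_pos (h : nat) (s : list bool) : is_dyck_from h (false :: s) = true -> 0 < h.
Proof. simpl. now intros [H _]%andb_true_iff; apply Nat.ltb_lt. Qed.

Fixpoint below (h1 : nat) (x : list bool) (h2 : nat) (y : list bool) : bool :=
  match x, y with
  | [], [] => Nat.leb h1 h2
  | a :: r, b :: s => Nat.leb h1 h2 && below (step h1 a) r (step h2 b) s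
  | _, _ => false
  end.

Lemma forallb_heights_below (p q : list bool) (h1 h2 : nat) : length p = length q ->
  forallb (fun ab => Nat.leb (fst ab) (snd ab)) (combine (heights_from h1 p) (heights_from h2 q))
  = below h1 p h2 q.
Proof.
  revert q h1 h2; induction p as [|a p IH]; intros [|b q] h1 h2 Hl; simpl in *; try discriminate.
  - now rewrite andb_true_r.
  - f_equal. apply IH. lia.
Qed.

Lemma path_le_below (p q : list bool) :
  path_le p q = true <-> length p = length q /\ below 0 p 0 q = true.
Proof.
  unfold path_le, heights. rewrite andb_true_iff, Nat.eqb_eq.
  split; intros [Hl H]; split; auto; now rewrite forallb_heights_below in *.
Qed.

Lemma below_refl (x : list bool) (h : nat) : below h x h x = true.
Proof. revert h; induction x; intros h; simpl; now rewrite Nat.leb_refl, ?IHx. Qed.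

Lemma below_start (x y : list bool) (h1 h2 : nat) : below h1 x h2 y = true -> h1 <= h2.
Proof.
  destruct x, y; simpl; try discriminate.
  - apply Nat.leb_le.
  - now intros [H _]%andb_true_iff; apply Nat.leb_le.
Qed.

Lemma below_length (x y : list bool) (h1 h2 : nat) :
  below h1 x h2 y = true -> length x = length y.
Proof.
  revert y h1 h2; induction x as [|a x IH]; intros [|b y] h1 h2 H; simpl in *;
    try discriminate; auto.
  apply andb_true_iff in H as [_ H]. f_equal; eauto.
Qed.

Lemma below_cons (a b : bool) (r s : list bool) (h1 h2 : nat) :
  below h1 (a :: r) h2 (b :: s) = true <-> h1 <= h2 /\ below (step h1 a) r (step h2 b) s = true.
Proof. simpl. now rewrite andb_true_iff, Nat.leb_le. Qed.

Lemma below_same_first (a c : bool) (r s t : list bool) (h : nat) :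
  below (step h a) r (step h c) t = true -> below (step h c) t (step h a) s = true -> c = a.
Proof. intros H1%below_start H2%below_start. apply (step_inj h). lia. Qed.

Lemma below_antisym (x y : list bool) (h : nat) :
  below h x h y = true -> below h y h x = true -> x = y.
Proof.
  revert y h; induction x as [|a x IH]; intros [|b y] h H1 H2; simpl in *; try discriminate; auto.
  apply andb_true_iff in H1 as [_ H1]. apply andb_true_iff in H2 as [_ H2].
  pose proof (below_same_first _ _ _ _ _ _ H2 H1) as <-.
  f_equal. eapply IH; eauto.
Qed.

Fixpoint flips (w : list bool) : list (list bool) :=
  match w with
  | [] => []
  | a :: r => match a, r with false, true :: r' => [true :: false :: r'] | _, _ => [] end
              ++ map (cons a) (flips r)
  end.

Lemma in_flips (a : bool) (r y : list bool) : In y (flips (a :: r)) ->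
  (a = false /\ exists r', r = true :: r' /\ y = true :: false :: r') \/
  (exists y', y = a :: y' /\ In y' (flips r)).
Proof.
  simpl. intros [Hy|Hy]%in_app_or.
  - left. destruct a, r as [|[] r']; try contradiction.
    destruct Hy as [<-|[]]. eauto.
  - right. apply in_map_iff in Hy as [y' [<- Hy']]. eauto.
Qed.

Lemma flips_length_eq (x y : list bool) : In y (flips x) -> length y = length x.
Proof.
  revert y; induction x as [|a r IH]; intros y Hy; [contradiction|].
  apply in_flips in Hy as [[_ [r' [-> ->]]]|[y' [-> Hy']]]; simpl; auto.
Qed.

Lemma flip_above (x y : list bool) (h : nat) : is_dyck_from h x = true -> In y (flips x) ->
  is_dyck_from h y = true /\ below h x h y = true /\ y <> x.
Proof.
  revert y h; induction x as [|a r IH]; intros y h Hd Hy; [contradiction|].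
  apply in_flips in Hy as [[-> [r' [-> ->]]]|[y' [-> Hy']]].
  - pose proof (dyck_down_pos _ _ Hd) as Hh.
    simpl in Hd |- *. apply andb_true_iff in Hd as [_ Hd].
    replace (S (h - 1)) with h in * by lia. replace (h - 0) with h by lia.
    rewrite Hd, !Nat.leb_refl, below_refl, andb_true_r.
    repeat split; [apply Nat.leb_le; lia | discriminate].
  - pose proof (dyck_tail _ _ _ Hd) as Hr.
    destruct (IH _ _ Hr Hy') as [Hyd [Hle Hne]].
    repeat split.
    + destruct a; [exact Hyd|]. simpl in Hd, Hyd |- *.
      apply andb_true_iff in Hd as [Hh _]. now rewrite Hh, Hyd.
    + now rewrite below_cons.
    + congruence.
Qed.

(* Nothing lies strictly between DU r and UD r: they differ at one abscissa only. *)
Lemma valley_flip_no_between (h : nat) (r z : list bool) :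
  is_dyck_from h (false :: true :: r) = true -> is_dyck_from h z = true ->
  below h (false :: true :: r) h z = true -> below h z h (true :: false :: r) = true ->
  z = false :: true :: r \/ z = true :: false :: r.
Proof.
  intros Hd Hz H1 H2. pose proof (dyck_down_pos _ _ Hd) as Hh.
  pose proof (below_length _ _ _ _ H1) as Hl.
  destruct z as [|c [|d t]]; try discriminate.
  apply below_cons in H1 as [_ H1], H2 as [_ H2].
  apply below_cons in H1 as [_ H1], H2 as [_ H2].
  simpl in H1, H2. replace (S (h - 1)) with h in * by lia. rewrite Nat.sub_0_r in *.
  destruct c, d; simpl in H1, H2, Hz.
  - apply below_start in H2. lia.
  - right. f_equal. f_equal. apply (below_antisym _ _ h); now rewrite Nat.sub_0_r in *.
  - left. f_equal. f_equal. apply (below_antisym _ _ h); now replace (S (h - 1)) with h in * by lia.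
  - apply andb_true_iff in Hz as [_ Hz]. apply dyck_down_pos in Hz.
    apply below_start in H1. lia.
Qed.

Lemma flip_no_between (x y z : list bool) (h : nat) :
  is_dyck_from h x = true -> In y (flips x) -> is_dyck_from h z = true ->
  below h x h z = true -> below h z h y = true -> z = x \/ z = y.
Proof.
  revert y z h; induction x as [|a r IH]; intros y z h Hd Hy Hz H1 H2; [contradiction|].
  apply in_flips in Hy as [[-> [r' [-> ->]]]|[y' [-> Hy']]].
  - now apply (valley_flip_no_between h).
  - destruct z as [|c t]; [discriminate|].
    apply below_cons in H1 as [_ H1], H2 as [_ H2].
    pose proof (below_same_first _ _ _ _ _ _ H1 H2) as ->.
    destruct (IH _ _ _ (dyck_tail _ _ _ Hd) Hy' (dyck_tail _ _ _ Hz) H1 H2) as [->| ->]; auto.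
Qed.

(* If x = D r lies below y and y is at least two units higher than x after the first
   step, then x has a flip still below y: flip the first valley of x. *)
Lemma flip_below_of_gap (r s : list bool) (c : bool) (hx hy : nat) :
  is_dyck_from hx (false :: r) = true -> is_dyck_from hy (c :: s) = true ->
  below hx (false :: r) hy (c :: s) = true -> hx + 1 <= step hy c ->
  exists f, In f (flips (false :: r)) /\ below hx f hy (c :: s) = true.
Proof.
  revert s c hx hy; induction r as [|b r IH]; intros s c hx hy Hx Hy Hle Hgap.
  all: pose proof (below_length _ _ _ _ Hle) as Hl; pose proof (dyck_down_pos _ _ Hx) as Hpos.
  - destruct s; [|discriminate].
    apply dyck_tail in Hy. simpl in Hy. apply Nat.eqb_eq in Hy. lia.
  - destruct s as [|d s]; [discriminate|].
    apply below_cons in Hle as [H0 Hle]. apply below_cons in Hle as [_ Hle].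
    destruct b.
    + exists (true :: false :: r). split; [simpl; auto|].
      apply below_cons. split; [lia|]. apply below_cons. split; [simpl; lia|].
      simpl in Hle |- *. now replace (hx - 0) with (S (hx - 1)) by lia.
    + destruct (IH s d (hx - 1) (step hy c) (dyck_tail _ _ _ Hx) (dyck_tail _ _ _ Hy))
        as [f [Hf Hfle]].
      * apply below_cons. split; [lia | exact Hle].
      * destruct d; simpl; lia.
      * exists (false :: f). split; [simpl; now apply in_map|].
        apply below_cons. split; [lia | exact Hfle].
Qed.

Lemma flip_below_exists (x y : list bool) (h : nat) :
  is_dyck_from h x = true -> is_dyck_from h y = true ->
  below h x h y = true -> x <> y -> exists f, In f (flips x) /\ below h f h y = true.
Proof.
  revert y h; induction x as [|a r IH]; intros y h Hx Hy Hle Hne.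
  all: destruct y as [|c s]; try discriminate; try congruence.
  destruct (bool_dec a c) as [<-|Hac].
  - apply below_cons in Hle as [H0 Hle].
    destruct (IH s (step h a) (dyck_tail _ _ _ Hx) (dyck_tail _ _ _ Hy) Hle) as [f [Hf Hfle]];
      [congruence|].
    exists (a :: f). split.
    + simpl. apply in_or_app. right. now apply in_map.
    + now apply below_cons.
  - destruct a, c; try congruence.
    + apply below_cons in Hle as [_ Hle]. apply below_start in Hle. simpl in Hle. lia.
    + apply (flip_below_of_gap r s true h h Hx Hy Hle).
      pose proof (dyck_down_pos _ _ Hx). simpl. lia.
Qed.

Lemma all_words_spec (k : nat) (w : list bool) : In w (all_words k) <-> length w = k.
Proof.
  revert w; induction k as [|k IH]; intros w; simpl.
  - split; [now intros [<-|[]] | destruct w; [auto | discriminate]].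
  - rewrite in_app_iff, !in_map_iff. split.
    + intros [[w' [<- H]]|[w' [<- H]]]; simpl; f_equal; now apply IH.
    + destruct w as [|[] w']; simpl; intros H; try discriminate; injection H as H;
        [left | right]; exists w'; split; auto; now apply IH.
Qed.

Lemma NoDup_map_cons (b : bool) (l : list (list bool)) : NoDup l -> NoDup (map (cons b) l).
Proof. intros H. apply NoDup_map_NoDup_ForallPairs; auto. now intros x y _ _ [= ->]. Qed.

Lemma all_words_NoDup (k : nat) : NoDup (all_words k).
Proof.
  induction k as [|k IH]; simpl; [repeat constructor; auto|].
  apply NoDup_app; try now apply NoDup_map_cons.
  intros a [? [<- _]]%in_map_iff [? [E _]]%in_map_iff. discriminate.
Qed.

Lemma dyck_spec (n : nat) (w : list bool) :
  In w (dyck n) <-> length w = 2 * n /\ is_dyck_from 0 w = true.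
Proof. unfold dyck. now rewrite filter_In, all_words_spec. Qed.

Lemma path_eqb_true (p q : list bool) : path_eqb p q = true <-> p = q.
Proof. unfold path_eqb. destruct list_eq_dec; split; congruence. Qed.

Lemma covers_in_spec {A : Type} (P : list A) (eqb le : A -> A -> bool) (x y : A) :
  covers_in P eqb le x y = true <->
  lt_in eqb le x y = true /\
  (forall z, In z P -> ~ (lt_in eqb le x z = true /\ lt_in eqb le z y = true)).
Proof.
  unfold covers_in. rewrite andb_true_iff, negb_true_iff, <- not_true_iff_false, existsb_exists.
  split; intros [Hxy Hz]; split; auto.
  - intros z Hin Hb. apply Hz. exists z. now rewrite andb_true_iff.
  - intros [z [Hin Hb]]. apply (Hz z Hin). now apply andb_true_iff.
Qed.

Lemma lt_in_dyck (n : nat) (x y : list bool) : In x (dyck n) -> In y (dyck n) ->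
  lt_in path_eqb path_le x y = true <-> below 0 x 0 y = true /\ x <> y.
Proof.
  intros [Hx _]%dyck_spec [Hy _]%dyck_spec.
  unfold lt_in. rewrite andb_true_iff, path_le_below, negb_true_iff, <- not_true_iff_false,
    path_eqb_true. intuition congruence.
Qed.

Lemma covers_dyck_iff (n : nat) (x y : list bool) : In x (dyck n) -> In y (dyck n) ->
  covers_in (dyck n) path_eqb path_le x y = true <-> In y (flips x).
Proof.
  intros Hx Hy. pose proof Hx as [Hxl Hxd]%dyck_spec. pose proof Hy as [Hyl Hyd]%dyck_spec.
  rewrite covers_in_spec, (lt_in_dyck n x y Hx Hy). split.
  - intros [[Hle Hne] Hnone].
    destruct (flip_below_exists x y 0 Hxd Hyd Hle Hne) as [f [Hf Hfy]].
    destruct (list_eq_dec bool_dec f y) as [<-|Hfne]; [exact Hf|exfalso].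
    destruct (flip_above x f 0 Hxd Hf) as [Hfd [Hxf Hfx]].
    assert (Hfn : In f (dyck n)).
    { apply dyck_spec. split; [rewrite (flips_length_eq x f Hf) |]; auto. }
    apply (Hnone f Hfn). rewrite (lt_in_dyck n x f Hx Hfn), (lt_in_dyck n f y Hfn Hy).
    auto.
  - intros Hf. destruct (flip_above x y 0 Hxd Hf) as [_ [Hle Hne]].
    split; [auto|]. intros z Hz. pose proof Hz as [_ Hzd]%dyck_spec.
    rewrite (lt_in_dyck n x z Hx Hz), (lt_in_dyck n z y Hz Hy).
    intros [[Hxz Hxz'] [Hzy Hzy']].
    destruct (flip_no_between x y z 0 Hxd Hf Hzd Hxz Hzy); congruence.
Qed.

Fixpoint valleys (w : list bool) : nat :=
  match w with
  | [] => 0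
  | a :: r => (if negb a && hd false r then 1 else 0) + valleys r
  end.

Lemma flips_length (x : list bool) : length (flips x) = valleys x.
Proof.
  induction x as [|a r IH]; simpl; auto.
  rewrite length_app, length_map, IH.
  destruct a; [|destruct r as [|[] r']]; reflexivity.
Qed.

Lemma flips_NoDup (x : list bool) : NoDup (flips x).
Proof.
  induction x as [|a r IH]; simpl; [constructor|].
  destruct a; [|destruct r as [|[] r']]; simpl; try solve [constructor | now apply NoDup_map_cons].
  constructor; [|now apply NoDup_map_cons].
  now intros [? [[=] _]]%in_map_iff.
Qed.

Lemma hasse_edges_sum {A : Type} (P : list A) (eqb le : A -> A -> bool) :
  hasse_edges P eqb le =
  list_sum (map (fun x => length (filter (covers_in P eqb le x) P)) P).
Proof.
  unfold hasse_edges. set (c := covers_in P eqb le).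
  enough (G : forall Q, length (filter (fun xy => c (fst xy) (snd xy)) (list_prod Q P)) =
                        list_sum (map (fun x => length (filter (c x) P)) Q)) by apply G.
  induction Q as [|a Q IH]; simpl; auto.
  now rewrite filter_app, length_app, IH, filter_map_swap, length_map.
Qed.

Lemma ell_dyck_valleys (n : nat) : ell_dyck n = list_sum (map valleys (dyck n)).
Proof.
  unfold ell_dyck. rewrite hasse_edges_sum. f_equal.
  apply map_ext_in. intros x Hx. rewrite <- flips_length.
  assert (Hflip_in : forall y, In y (flips x) -> In y (dyck n)).
  { intros y Hy. apply dyck_spec in Hx as [Hxl Hxd].
    apply dyck_spec. split; [now rewrite (flips_length_eq x y Hy) | now apply (flip_above x y 0)]. }
  apply Nat.le_antisymm; apply NoDup_incl_length.
  - apply NoDup_filter, NoDup_filter, all_words_NoDup.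
  - intros y [Hy Hc]%filter_In. now apply (covers_dyck_iff n x y Hx Hy).
  - apply flips_NoDup.
  - intros y Hy. apply filter_In. split; [auto|].
    now apply (covers_dyck_iff n x y Hx (Hflip_in y Hy)).
Qed.

(* Number of peaks (factors UD) of prev :: w, where prev is a virtual step before w. *)
Fixpoint peaks_after (prev : bool) (w : list bool) : nat :=
  match w with
  | [] => 0
  | a :: r => (if prev && negb a then 1 else 0) + peaks_after a r
  end.

(* Peaks minus valleys only depends on the first and the last step. *)
Lemma peaks_valleys_balance (prev : bool) (w : list bool) :
  peaks_after prev w + Nat.b2n (last (prev :: w) false) =
  valleys w + Nat.b2n (negb prev && hd false w) + Nat.b2n prev.
Proof.
  revert prev; induction w as [|a r IH]; intros prev; [simpl; now destruct prev|].
  specialize (IH a). change (last (prev :: a :: r) false) with (last (a :: r) false).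
  simpl. destruct prev, a, (hd false r); simpl in *; lia.
Qed.

Lemma dyck_ends_down (h : nat) (w : list bool) :
  is_dyck_from h w = true -> last (false :: w) false = false.
Proof.
  revert h; induction w as [|a r IH]; intros h Hd; [reflexivity|].
  destruct r as [|b r].
  - destruct a; [discriminate | reflexivity].
  - exact (IH _ (dyck_tail _ _ _ Hd)).
Qed.

Lemma peaks_of_dyck (w : list bool) : w <> [] -> is_dyck_from 0 w = true ->
  peaks_after false w = S (valleys w).
Proof.
  intros Hne Hd. pose proof (peaks_valleys_balance false w) as E.
  rewrite (dyck_ends_down 0 w Hd) in E.
  destruct w as [|[] r]; [congruence | simpl in *; lia | discriminate].
Qed.

Definition ballot (h m : nat) : nat := length (filter (is_dyck_from h) (all_words m)).

Definition peak_total (h m : nat) (prev : bool) : nat :=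
  list_sum (map (peaks_after prev) (filter (is_dyck_from h) (all_words m))).

Lemma ballot_0 (h : nat) : ballot h 0 = if Nat.eqb h 0 then 1 else 0.
Proof. unfold ballot. simpl. now destruct (h =? 0). Qed.

Lemma filter_dyck_down (h : nat) (l : list (list bool)) :
  filter (fun w => is_dyck_from h (false :: w)) l =
  match h with 0 => [] | S h' => filter (is_dyck_from h') l end.
Proof.
  destruct h as [|h']; simpl.
  - now induction l.
  - apply filter_ext. intros w. now rewrite Nat.sub_0_r.
Qed.

Lemma ballot_S (h m : nat) :
  ballot h (S m) = ballot (S h) m + match h with 0 => 0 | S h' => ballot h' m end.
Proof.
  unfold ballot. simpl. rewrite filter_app, length_app, !filter_map_swap, !length_map.
  rewrite filter_dyck_down. now destruct h.
Qed.

Lemma ballot_below (h m : nat) : m < h -> ballot h m = 0.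
Proof.
  revert h; induction m as [|m IH]; intros h H.
  - rewrite ballot_0. destruct h; [lia | reflexivity].
  - rewrite ballot_S, IH by lia. destruct h; [lia|]. rewrite IH; lia.
Qed.

Lemma list_sum_map_const_add {A : Type} (k : nat) (f : A -> nat) (l : list A) :
  list_sum (map (fun x => k + f x) l) = k * length l + list_sum (map f l).
Proof. induction l as [|a l IH]; simpl; [lia | rewrite IH; lia]. Qed.

Lemma peak_total_0 (h : nat) (prev : bool) : peak_total h 0 prev = 0.
Proof. unfold peak_total. simpl. now destruct (h =? 0). Qed.

(* First-step decomposition of the peak total: a down step after an up step is a peak. *)
Lemma peak_total_S (h m : nat) (prev : bool) : peak_total h (S m) prev =
  peak_total (S h) m true +
  match h with 0 => 0 | S h' => Nat.b2n prev * ballot h' m + peak_total h' m false end.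
Proof.
  unfold peak_total, ballot. simpl.
  rewrite filter_app, map_app, list_sum_app, !filter_map_swap, !map_map, filter_dyck_down.
  f_equal.
  - f_equal. apply map_ext. intros w. simpl. now rewrite andb_false_r.
  - destruct h as [|h']; [reflexivity|].
    rewrite <- list_sum_map_const_add. f_equal. apply map_ext. now destruct prev.
Qed.

(* A virtual up step adds one peak to each path that starts with a down step. *)
Lemma peak_total_up (h m : nat) : peak_total h m true = peak_total h m false +
  match m, h with S m', S h' => ballot h' m' | _, _ => 0 end.
Proof.
  destruct m as [|m]; [now rewrite !peak_total_0|].
  rewrite !peak_total_S. destruct h; simpl; lia.
Qed.

Lemma peak_total_down (m h : nat) : peak_total h m false = (m - 1) * ballot h (m - 2).
Proof.
  revert h; induction m as [|m IH]; intros h; [now rewrite peak_total_0|].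
  destruct m as [|m]; [rewrite peak_total_S; destruct h; rewrite !peak_total_0; simpl; lia|].
  rewrite peak_total_S, peak_total_up. destruct m as [|k].
  - destruct h; rewrite !IH; simpl; lia.
  - destruct h; rewrite !IH; simpl; rewrite ?Nat.sub_0_r, ?(ballot_S _ k); simpl; nia.
Qed.

(* Valleys = peaks - paths, so l(D_n) + B(0, 2n) = (2n - 1) B(0, 2n - 2). *)
Lemma ell_dyck_ballot (n : nat) : 1 <= n ->
  ell_dyck n + ballot 0 (2 * n) = (2 * n - 1) * ballot 0 (2 * n - 2).
Proof.
  intros Hn. rewrite <- peak_total_down, ell_dyck_valleys.
  unfold peak_total, ballot. change (filter (is_dyck_from 0) (all_words (2 * n))) with (dyck n).
  assert (Hpaths : forall w, In w (dyck n) -> w <> [] /\ is_dyck_from 0 w = true).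
  { intros w [Hl Hd]%dyck_spec. split; [intros ->; simpl in Hl; lia | exact Hd]. }
  induction (dyck n) as [|w l IH]; simpl; [reflexivity|].
  destruct (Hpaths w (or_introl eq_refl)) as [Hne Hd].
  rewrite (peaks_of_dyck w Hne Hd).
  specialize (IH (fun v Hv => Hpaths v (or_intror Hv))). lia.
Qed.

Open Scope R_scope.

Lemma binom_0 (n : nat) : C n 0 = 1.
Proof.
  unfold C. rewrite Nat.sub_0_r. simpl fact. rewrite Rmult_1_l. field. apply INR_fact_neq_0.
Qed.

Lemma binom_pos (n k : nat) : 0 < C n k.
Proof.
  unfold C. apply Rdiv_lt_0_compat; [apply INR_fact_lt_0|].
  apply Rmult_lt_0_compat; apply INR_fact_lt_0.
Qed.

Lemma ballot_binom (m h u : nat) : m = (h + 2 * u)%nat ->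
  INR (ballot h m) + match u with 0%nat => 0 | S u' => C m u' end = C m u.
Proof.
  revert h u; induction m as [|m IH]; intros h u Hm.
  - assert (h = 0%nat /\ u = 0%nat) as [-> ->] by lia. rewrite ballot_0, binom_0. simpl. lra.
  - rewrite ballot_S. destruct h as [|h'].
    + destruct u as [|u]; [lia|]. rewrite Nat.add_0_r.
      pose proof (IH 1%nat u ltac:(lia)) as IH1.
      assert (Hsym : C m (S u) = C m u) by (rewrite pascal_step1 by lia; f_equal; lia).
      rewrite <- pascal by lia.
      destruct u as [|v]; [rewrite !binom_0 in *; lra|].
      rewrite <- pascal by lia. lra.
    + rewrite plus_INR. destruct u as [|u].
      * rewrite ballot_below by lia. pose proof (IH h' 0%nat ltac:(lia)) as IH0.
        rewrite !binom_0 in *. simpl INR. lra.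
      * pose proof (IH (S (S h')) u ltac:(lia)) as IH1.
        pose proof (IH h' (S u) ltac:(lia)) as IH2.
        rewrite <- pascal by lia.
        destruct u as [|v]; [rewrite !binom_0 in *; lra|].
        rewrite <- pascal by lia. lra.
Qed.

Definition central (n : nat) : R := C (2 * n) n.

Lemma central_0 : central 0 = 1.
Proof. apply binom_0. Qed.

Lemma binom_below_central (k : nat) :
  C (2 * S k) k * (INR k + 2) = C (2 * S k) (S k) * (INR k + 1).
Proof.
  unfold C.
  replace (2 * S k - k)%nat with (S (S k)) by lia. replace (2 * S k - S k)%nat with (S k) by lia.
  rewrite (fact_simpl (S k)), (fact_simpl k), !mult_INR, !S_INR.
  pose proof (pos_INR k). pose proof (INR_fact_neq_0 k). pose proof (INR_fact_neq_0 (2 * S k)).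
  field. repeat split; lra.
Qed.

Lemma central_succ (k : nat) : central (S k) * (INR k + 1) = central k * (2 * (2 * INR k + 1)).
Proof.
  unfold central, C.
  replace (2 * S k - S k)%nat with (S k) by lia. replace (2 * k - k)%nat with k by lia.
  replace (2 * S k)%nat with (S (S (2 * k))) by lia.
  rewrite (fact_simpl (S (2 * k))), (fact_simpl (2 * k)), (fact_simpl k),
    !mult_INR, !S_INR, !mult_INR.
  pose proof (pos_INR k). pose proof (INR_fact_neq_0 k). pose proof (INR_fact_neq_0 (2 * k)).
  simpl (INR 2). field. repeat split; lra.
Qed.

Lemma binom_odd_vs_central (k : nat) :
  C (2 * S (S k) - 1) k * (2 * (INR k + 3)) = C (2 * S (S k)) (S (S k)) * (INR k + 1).
Proof.
  unfold C.
  replace (2 * S (S k) - 1 - k)%nat with (S (S (S k))) by lia.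
  replace (2 * S (S k) - S (S k))%nat with (S (S k)) by lia.
  replace (2 * S (S k) - 1)%nat with (S (S (S (2 * k)))) by lia.
  replace (2 * S (S k))%nat with (S (S (S (S (2 * k))))) by lia.
  rewrite (fact_simpl (S (S (S (2 * k))))), (fact_simpl (S (S k))), (fact_simpl (S k)),
    (fact_simpl k), !mult_INR, !S_INR, !mult_INR.
  pose proof (pos_INR k). pose proof (INR_fact_neq_0 k).
  pose proof (INR_fact_neq_0 (S (S (S (2 * k))))).
  simpl (INR 2). field. repeat split; lra.
Qed.

Definition catalan (n : nat) : R := central n / (INR n + 1).

Lemma ballot_catalan (n : nat) : INR (ballot 0 (2 * n)) = catalan n.
Proof.
  unfold catalan, central. destruct n as [|k].
  - change (2 * 0)%nat with 0%nat. rewrite ballot_0, binom_0. simpl. lra.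
  - pose proof (ballot_binom (2 * S k) 0 (S k) ltac:(lia)) as H.
    pose proof (binom_below_central k). pose proof (pos_INR k). rewrite S_INR.
    apply (Rmult_eq_reg_r (INR k + 1 + 1)); [|lra]. field_simplify; [|lra].
    apply (Rmult_eq_reg_r (INR k + 2)); [|lra]. nra.
Qed.

Lemma ell_dyck_closed (m : nat) :
  INR (ell_dyck (S m)) = central (S m) * INR m / (2 * (INR m + 2)).
Proof.
  pose proof (ell_dyck_ballot (S m) ltac:(lia)) as H.
  replace (2 * S m - 2)%nat with (2 * m)%nat in H by lia.
  replace (2 * S m - 1)%nat with (S (2 * m)) in H by lia.
  apply (f_equal INR) in H. rewrite plus_INR, mult_INR, !ballot_catalan, S_INR, mult_INR in H.
  unfold catalan in H. rewrite S_INR in H. simpl (INR 2) in H.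
  pose proof (central_succ m) as Hr. pose proof (pos_INR m).
  assert (Hc : central m = central (S m) * (INR m + 1) / (2 * (2 * INR m + 1)))
    by (rewrite Hr; field; lra).
  rewrite Hc in H. apply (Rplus_eq_reg_r (central (S m) / (INR m + 1 + 1))).
  rewrite H. field. lra.
Qed.

Lemma ell_dyck_binomial (n : nat) : (2 <= n)%nat ->
  INR (ell_dyck n) = / 2 * C (2 * n) n * (INR n - 1) / (INR n + 1) /\
  INR (ell_dyck n) = C (2 * n - 1) (n - 2).
Proof.
  intros Hn. destruct n as [|[|k]]; try lia.
  pose proof (binom_odd_vs_central k) as Hodd. pose proof (pos_INR k).
  rewrite ell_dyck_closed, !S_INR.
  change (C (2 * S (S k)) (S (S k))) with (central (S (S k))) in *.
  split; [field; lra|].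
  replace (S (S k) - 2)%nat with k by lia.
  apply (Rmult_eq_reg_r (2 * (INR k + 3))); [|lra]. rewrite Hodd. field. lra.
Qed.

Lemma hasse_index_formula (n : nat) : (1 <= n)%nat -> hasse_index_dyck n = (INR n - 1) / 2.
Proof.
  intros Hn. destruct n as [|m]; [lia|]. unfold hasse_index_dyck.
  change (length (dyck (S m))) with (ballot 0 (2 * S m)).
  rewrite ballot_catalan, ell_dyck_closed. unfold catalan.
  pose proof (binom_pos (2 * S m) (S m)) as Hpos. fold (central (S m)) in Hpos.
  pose proof (pos_INR m). rewrite !S_INR. field. lra.
Qed.

Lemma hasse_index_asymptotic : Un_cv (fun n => hasse_index_dyck n / (INR n / 2)) 1.
Proof.
  intros eps Heps. destruct (INR_unbounded (/ eps)) as [N HN].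
  exists (S N). intros n Hn. unfold R_dist. rewrite hasse_index_formula by lia.
  assert (HnN : INR N < INR n) by (apply lt_INR; lia).
  assert (Hpos : 0 < INR n) by (pose proof (pos_INR N); lra).
  replace ((INR n - 1) / 2 / (INR n / 2) - 1) with (- / INR n) by (field; lra).
  rewrite Rabs_Ropp, Rabs_right by (left; apply Rinv_0_lt_compat; lra).
  apply (Rmult_lt_reg_r (INR n)); [lra|]. rewrite Rinv_l by lra.
  apply (Rmult_lt_reg_l (/ eps)); [apply Rinv_0_lt_compat; lra|].
  rewrite <- Rmult_assoc, Rinv_l by lra. lra.
Qed.

(* C(2n, n) <= 4^n, so the central binomial series converges on |x| < 1/4. *)
Lemma central_bound (n : nat) : 0 < central n <= 4 ^ n.
Proof.
  induction n as [|n IH]; [rewrite central_0; simpl; lra|].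
  split; [apply binom_pos|].
  pose proof (central_succ n) as Hr. pose proof (pos_INR n).
  assert (E : central (S n) = central n * (2 * (2 * INR n + 1)) / (INR n + 1))
    by (rewrite <- Hr; field; lra).
  rewrite E. simpl. apply (Rmult_le_reg_r (INR n + 1)); [lra|]. field_simplify; [|lra]. nra.
Qed.

Lemma central_radius : Rbar_le (Finite (/ 4)) (CV_radius central).
Proof.
  apply (proj1 (CV_radius_bounded central)). exists 1. intros n.
  destruct (central_bound n) as [H1 H2]. pose proof (pow_lt 4 n ltac:(lra)) as H4.
  rewrite pow_inv. rewrite Rabs_right.
  - apply (Rmult_le_reg_r (4 ^ n)); [exact H4|].
    rewrite Rmult_assoc, Rinv_l, Rmult_1_r, Rmult_1_l by lra. exact H2.
  - apply Rle_ge, Rmult_le_pos; [lra|]. left; now apply Rinv_0_lt_compat.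
Qed.

Lemma central_inside (x : R) : Rabs x < / 4 -> Rbar_lt (Finite (Rabs x)) (CV_radius central).
Proof.
  intros Hx. pose proof central_radius. destruct (CV_radius central); simpl in *; auto; lra.
Qed.

(* Coefficientwise form of the differential equation 2 f = f' - 4 x f'. *)
Lemma central_ode_coeff (n : nat) :
  PS_scal 2 central n = PS_minus (PS_derive central) (PS_scal 4 (PS_incr_1 (PS_derive central))) n.
Proof.
  assert (Hd : forall k, PS_derive central k = central k * (2 * (2 * INR k + 1))).
  { intros k. unfold PS_derive. rewrite S_INR, Rmult_comm. apply central_succ. }
  unfold PS_minus, PS_scal, PS_incr_1, plus, opp, scal, mult; simpl.
  unfold plus, opp, scal, mult; simpl.
  destruct n as [|k]; rewrite !Hd; [unfold zero; simpl; ring|].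
  pose proof (central_succ k). rewrite S_INR. lra.
Qed.

Lemma central_ode (x : R) : Rabs x < / 4 ->
  (1 - 4 * x) * PSeries (PS_derive central) x = 2 * PSeries central x.
Proof.
  intros Hx. pose proof (ex_pseries_derive central x (central_inside x Hx)) as Hd.
  rewrite <- (PSeries_scal 2 central x), (PSeries_ext _ _ x central_ode_coeff).
  rewrite PSeries_minus, PSeries_scal, PSeries_incr_1; [ring | exact Hd|].
  apply ex_pseries_scal; [apply Rmult_comm | now apply ex_pseries_incr_1].
Qed.

Lemma central_sqrt_derive (x : R) : Rabs x < / 4 ->
  is_derive (fun y => PSeries central y * sqrt (1 - 4 * y)) x 0.
Proof.
  intros Hx. assert (Hx' : 1 - 4 * x > 0) by (apply Rabs_def2 in Hx; lra).
  assert (Hs : 0 < sqrt (1 - 4 * x)) by now apply sqrt_lt_R0.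
  assert (Hsqrt : is_derive (fun y => sqrt (1 - 4 * y)) x (-2 / sqrt (1 - 4 * x))).
  { auto_derive; [lra|]. replace (1 + - (4 * x)) with (1 - 4 * x) by ring. field. lra. }
  pose proof (is_derive_mult _ _ _ _ _ (is_derive_PSeries central x (central_inside x Hx)) Hsqrt)
    as H.
  replace 0 with (PSeries (PS_derive central) x * sqrt (1 - 4 * x) +
                  PSeries central x * (-2 / sqrt (1 - 4 * x))); [exact H|].
  pose proof (central_ode x Hx) as E. pose proof (sqrt_sqrt (1 - 4 * x) ltac:(lra)) as Hss.
  apply (Rmult_eq_reg_r (sqrt (1 - 4 * x))); [|lra].
  field_simplify; [|lra]. rewrite <- Rsqr_pow2. unfold Rsqr. rewrite Hss. lra.
Qed.

Lemma central_gf_closed (x : R) : Rabs x < / 4 -> PSeries central x * sqrt (1 - 4 * x) = 1.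
Proof.
  intros Hx. set (g := fun y => PSeries central y * sqrt (1 - 4 * y)). change (g x = 1).
  assert (Hg0 : g 0 = 1).
  { unfold g. rewrite PSeries_0, central_0. replace (1 - 4 * 0) with 1 by ring.
    rewrite sqrt_1. ring. }
  rewrite <- Hg0. apply Rabs_def2 in Hx as [Hx1 Hx2].
  destruct (Rtotal_order x 0) as [Hlt|[->|Hgt]]; [|reflexivity|symmetry];
    apply eq_is_derive; auto; intros t Ht; apply central_sqrt_derive, Rabs_def1; lra.
Qed.

Lemma central_series (x : R) : Rabs x < / 4 ->
  is_series (fun n => central n * x ^ n) (/ sqrt (1 - 4 * x)).
Proof.
  intros Hx. assert (Hs : 0 < sqrt (1 - 4 * x)) by (apply sqrt_lt_R0; apply Rabs_def2 in Hx; lra).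
  replace (/ sqrt (1 - 4 * x)) with (PSeries central x).
  - pose proof (PSeries_correct central x (CV_radius_inside central x (central_inside x Hx))) as H.
    eapply is_series_ext; [|exact H]. intros n. simpl.
    rewrite pow_n_pow. unfold scal, mult; simpl. unfold mult; simpl. ring.
  - apply (Rmult_eq_reg_r (sqrt (1 - 4 * x))); [|lra].
    rewrite central_gf_closed by exact Hx. field. lra.
Qed.

Lemma is_series_shift (a : nat -> R) (l : R) :
  is_series a l -> is_series (fun n => a (S n)) (l - a 0%nat).
Proof.
  intros H. apply is_series_incr_1. unfold plus; simpl.
  now replace (l - a 0%nat + a 0%nat) with l by ring.
Qed.

Lemma is_series_unshift (a : nat -> R) (l : R) :
  a 0%nat = 0 -> is_series (fun n => a (S n)) l -> is_series a l.
Proof.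
  intros H0 H. apply is_series_decr_1. unfold plus, opp; simpl. now rewrite H0, Ropp_0, Rplus_0_r.
Qed.

Lemma ell_dyck_0 : ell_dyck 0 = 0%nat.
Proof. vm_compute. reflexivity. Qed.

Lemma ell_dyck_central (m : nat) :
  INR (ell_dyck (S m)) = (central (S (S m)) - 3 * central (S m)) / 2.
Proof.
  rewrite ell_dyck_closed.
  pose proof (central_succ (S m)) as Hr. rewrite S_INR in Hr. pose proof (pos_INR m).
  replace (central (S (S m))) with (central (S m) * (2 * (2 * (INR m + 1) + 1)) / (INR m + 1 + 1))
    by (rewrite <- Hr; field; lra).
  field. lra.
Qed.

Lemma ell_dyck_gf (x : R) : 0 < Rabs x < / 4 ->
  infinite_sum (fun n => INR (ell_dyck n) * x ^ n)
    ((1 - 3 * x - (1 - x) * sqrt (1 - 4 * x)) / (2 * x * sqrt (1 - 4 * x))).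
Proof.
  intros [Hx0 Hx]. apply is_series_Reals.
  assert (Hxn : x <> 0) by (intros ->; rewrite Rabs_R0 in Hx0; lra).
  assert (Hs : 0 < sqrt (1 - 4 * x)) by (apply sqrt_lt_R0; apply Rabs_def2 in Hx; lra).
  set (F := / sqrt (1 - 4 * x)).
  pose proof (is_series_shift _ _ (central_series x Hx)) as H1.
  pose proof (is_series_shift _ _ H1) as H2. cbv beta in H1, H2.
  pose proof (is_series_plus _ _ _ _ (is_series_scal (/ (2 * x)) _ _ H2)
                                     (is_series_scal (- 3 / 2) _ _ H1)) as H3.
  apply is_series_unshift; [rewrite ell_dyck_0; simpl; ring|].
  replace ((1 - 3 * x - (1 - x) * sqrt (1 - 4 * x)) / (2 * x * sqrt (1 - 4 * x)))
    with (plus (scal (/ (2 * x)) (F - central 0 * x ^ 0 - central 1 * x ^ 1))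
               (scal (- 3 / 2) (F - central 0 * x ^ 0))).
  - eapply is_series_ext; [|exact H3]. intros n. unfold plus, scal, mult; simpl. unfold mult; simpl.
    rewrite ell_dyck_central. field. exact Hxn.
  - unfold plus, scal, mult, F; simpl. unfold mult; simpl.
    rewrite central_0. replace (central 1) with 2 by (unfold central, C; simpl; field).
    field. split; lra.
Qed.

Theorem mainTheorem3 :
  (forall x : R, 0 < Rabs x < / 4 ->
     infinite_sum (fun n => INR (ell_dyck n) * x ^ n)
       ((1 - 3 * x - (1 - x) * sqrt (1 - 4 * x)) / (2 * x * sqrt (1 - 4 * x)))) /\
  (forall n : nat, (2 <= n)%nat ->
     INR (ell_dyck n) = / 2 * C (2 * n) n * (INR n - 1) / (INR n + 1) /\
     INR (ell_dyck n) = C (2 * n - 1) (n - 2)) /\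
  (forall n : nat, (1 <= n)%nat -> hasse_index_dyck n = (INR n - 1) / 2) /\
  Un_cv (fun n => hasse_index_dyck n / (INR n / 2)) 1.
Proof.
  split; [exact ell_dyck_gf|].
  split; [exact ell_dyck_binomial|].
  split; [exact hasse_index_formula | exact hasse_index_asymptotic].
Qed.
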